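(* (a) If $P_n$ is a path of order $n$, then $S_2(P_n)$ is a DPDP-graph for every $n\ge 2$, and $S_2(P_n)$ is a minimal DPDP-graph if and only if $n\in\{2,3,4,5\}$. (b) If $C_m$ is a cycle of size $m$ (where $C_1$ is a vertex with one loop and $C_2$ consists of two vertices joined by two parallel edges), then $S_2(C_m)$ is a DPDP-graph for every positive integer $m$, and $S_2(C_m)$ is a minimal DPDP-graph if and only if $m\in\{1,2,3\}$.
   Context: Graphs are finite and may have multiple edges and loops. A leaf is a vertex of degree one. A set $D\subseteq V(G)$ is dominating if every vertex outside $D$ has a neighbor in $D$; $P$ is paired-dominating if it is dominating and the subgraph induced by $P$ has a perfect matching. A DPDP-graph is a graph $G$ admitting disjoint sets $D,P$ with $V(G)=D\cup P$, $D$ dominating and $P$ paired-dominating; a minimal DPDP-graph is a DPDP-graph no proper spanning subgraph of which is a DPDP-graph. 2-subdivision graph: for a graph $H$ with no isolated vertex, set of leaves $L_H$, and $\alpha:L_H\to\mathbb{N}=\{1,2,\dots\}$, $S_2(H)$ has vertex set $(V_H\setminus L_H)\cup\{(v,i): v\in L_H, 1\le i\le \alpha(v)\}$ together with two new vertices for each edge $e$ of $H$ ($u_e,v_e$ if $e$ joins $u\ne v$; $v_e^1,v_e^2$ if $e$ is a loop at $v$). Its edges are: the edge joining the two new vertices of each $e$; for $v\in V_H\setminus L_H$, $vv_e$ for each non-loop edge $e$ at $v$ and $vv_e^1,vv_e^2$ for each loop $e$ at $v$; for $v\in L_H$ with incident edge $e$, the edges $v_e(v,i)$, $1\le i\le\alpha(v)$.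 In (a) the function $\alpha$ on the leaves of $P_n$ is arbitrary. *)

From mathcomp Require Import all_boot.
From mathcomp Require Import zify.
Set Implicit Arguments. Unset Strict Implicit. Unset Printing Implicit Defensive.

Section DPDP.
Variables (T : finType) (adj : rel T).

Definition dominating (D : {set T}) : Prop :=
  forall x, x \notin D -> exists2 y, y \in D & adj x y.

Definition perfect_matching_of_induced (P : {set T}) (M : {set {set T}}) : Prop :=
  (forall e, e \in M ->
     exists x y, [/\ x != y, x \in P, y \in P, adj x y & e = [set x; y]]) /\
  (forall x, x \in P -> exists! e, e \in M /\ x \in e).

Definition paired_dominating (P : {set T}) : Prop :=
  dominating P /\ exists M, perfect_matching_of_induced P M.

Definition DPDP : Prop :=
  exists D P : {set T},
    [/\ [disjoint D & P], D :|: P = setT, dominating D & paired_dominating P].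
End DPDP.

(* Spanning
   subgraphs of the simple graph (T, adj) are the graphs (T, adj') with
   adj' a symmetric subrelation of adj; proper means some edge is lost. *)
Definition minimal_DPDP (T : finType) (adj : rel T) : Prop :=
  DPDP adj /\
  forall adj' : rel T, symmetric adj' -> subrel adj' adj ->
    (exists x y, adj x y && ~~ adj' x y) -> ~ DPDP adj'.

(* Multigraphs H = (V, E, ends): each edge e has endpoints ends e     *)
(* (a loop when both coincide).  Half-edges are pairs (e, side).       *)
Section S2.
Variables (V E : finType) (ends : E -> V * V) (alpha : V -> nat).

Definition endpt (h : E * bool) : V :=
  if h.2 then (ends h.1).2 else (ends h.1).1.

(* degree, loops counted twice *)
Definition deg (v : V) : nat := #|[set h : E * bool | endpt h == v]|.
Definition leaf (v : V) : bool := deg v == 1.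

(* vertices of S_2(H):
   inl (inl v)      : v a non-leaf vertex of H
   inl (inr (v,i))  : the copy (v, i+1), v a leaf, 0 <= i < alpha v
   inr (e, s)       : the new vertex of edge e on side s
                      (u_e / v_e for a non-loop, v_e^1 / v_e^2 for a loop) *)
Definition S2_vertex : finType :=
  (({v : V | ~~ leaf v} + {x : {v : V & 'I_(alpha v)} | leaf (tag x)})
     + (E * bool))%type.

Definition S2_adj : rel S2_vertex := fun x y =>
  match x, y with
  | inr h, inr h' => (h.1 == h'.1) && (h.2 != h'.2)
  | inl (inl v), inr h | inr h, inl (inl v) => endpt h == val v
  | inl (inr c), inr h | inr h, inl (inr c) => endpt h == tag (val c)
  | _, _ => false
  end.
End S2.
Arguments endpt {V E} ends h.
Arguments deg {V E} ends v.
Arguments leaf {V E} ends v.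
Arguments S2_vertex {V E} ends alpha.
Arguments S2_adj {V E} ends alpha x y.

Lemma path_lt1 n (j : 'I_n.-1) : j < n.
Proof. case: j => j /=; lia. Qed.
Lemma path_lt2 n (j : 'I_n.-1) : j.+1 < n.
Proof. case: j => j /=; lia. Qed.

Definition path_ends (n : nat) (j : 'I_n.-1) : 'I_n * 'I_n :=
  (Ordinal (path_lt1 j), Ordinal (path_lt2 j)).

(* C_m: vertices 0..m-1, edge j joins j and j+1 mod m;
   C_1 is one vertex with a loop, C_2 two vertices with two parallel edges *)
Definition cycle_ends (m : nat) (j : 'I_m) : 'I_m * 'I_m := (j, ordS j).

From mathcomp Require Import all_boot zify.
Set Implicit Arguments. Unset Strict Implicit. Unset Printing Implicit Defensive.

(* Label the vertices of S_2(H) by 3v for a vertex v of H (all copies (v, i) of a leaf sharing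
   the label of v) and by 3j+1, 3j+2 for the two new vertices of the j-th edge.  Adjacency in
   S_2(P_n) and S_2(C_m) is then pulled back from the path on 3n-2 labels and the cycle on 3m
   labels, and only the two end labels of the path carry several vertices, all pendant.
   A DPDP partition induces a colouring of the labels in which every label has a neighbour in P
   and every P-label one in D; conversely such a colouring whose P-labels are paired along
   edges lifts to a DPDP partition.  The pattern D P P repeated along the labels proves the DPDP
   property.  For n >= 6 (m >= 4) the pattern D P P D on the first twelve labels survives the
   deletion of the edge between labels 3 and 4, so the graph is not minimal.  For smaller n, m an
   exhaustive search over colourings shows that no deletion of an edge between singleton labels
   survives, while an edge at a pendant vertex can never be deleted. *)

Section DPDPGeneral.
Variable T : finType.
Implicit Types (adj : rel T) (D : {set T}).

Lemma DPDP_subrel adj adj' : subrel adj adj' -> DPDP adj -> DPDP adj'.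
Proof.
move=> sub [D [P [dDP DUP domD [domP [M [Medge Mcover]]]]]].
exists D, P; split => //.
- by move=> x /domD [y yD /sub xy]; exists y.
split; first by move=> x /domP [y yP /sub xy]; exists y.
exists M; split => // e /Medge [x [y [xy xP yP /sub adj_xy ->]]].
by exists x, y.
Qed.

Lemma DPDP_neighbours adj : symmetric adj -> DPDP adj ->
  exists D, (forall x, exists2 y, y \notin D & adj x y) /\
            (forall x, x \notin D -> exists2 y, y \in D & adj x y).
Proof.
move=> adjC [D [P [dDP DUP domD [domP [M [Medge Mcover]]]]]].
have PE x : (x \in P) = (x \notin D).
  apply/idP/idP => [xP | xD]; first by rewrite (disjointFl dDP xP).
  by move: (in_setT x); rewrite -DUP inE (negbTE xD).
exists D; split=> [x|]; last exact: domD.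
have [xD | xP] := boolP (x \in D).
  by have [|y yP xy] := domP x; [rewrite PE xD | exists y; rewrite -?PE].
rewrite -PE in xP; have [e [[eM xe] _]] := Mcover x xP.
have [a [b [_ aP bP ab eE]]] := Medge e eM.
move: xe; rewrite eE !inE => /orP[] /eqP->; first by exists b; rewrite -?PE.
by exists a; rewrite -?PE // adjC.
Qed.

Lemma DPDP_of_partner adj D (f : T -> T) :
  (forall x, exists2 y, (y \in D) = (x \notin D) & adj x y) ->
  (forall x, x \notin D -> [/\ f x \notin D, adj x (f x), f (f x) = x & f x != x]) ->
  DPDP adj.
Proof.
move=> opp partner; exists D, (~: D); split.
- by rewrite disjoints_subset setCK.
- by rewrite setUCr.
- by move=> x xD; have [y] := opp x; rewrite xD => yD xy; exists y.
split.
  move=> x; rewrite inE negbK => xD; have [y] := opp x.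
  by rewrite xD => yD xy; exists y; rewrite // inE yD.
exists [set [set x; f x] | x in ~: D]; split.
- move=> e /imsetP[x]; rewrite inE => xD ->.
  have [fxD xf _ fx_neq] := partner x xD.
  by exists x, (f x); split; rewrite ?inE // eq_sym.
move=> x; rewrite inE => xD; exists [set x; f x]; split.
  by split; [apply/imsetP; exists x; rewrite ?inE | rewrite !inE eqxx].
move=> e [/imsetP[y]]; rewrite inE => /partner[_ _ ffy _] -> /set2P[]->//.
by rewrite ffy setUC.
Qed.

End DPDPGeneral.

Definition remove_edge (T : eqType) (r : rel T) (a b : T) : rel T := fun x y =>
  r x y && ~~ ((x == a) && (y == b) || (x == b) && (y == a)).

Lemma remove_edge_sym (T : eqType) (r : rel T) a b :
  symmetric r -> symmetric (remove_edge r a b).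
Proof.
move=> rC x y; rewrite /remove_edge rC; congr (_ && ~~ _).
by rewrite orbC andbC [(y == b) && _]andbC.
Qed.

Lemma remove_edge_subrel (T : eqType) (r r' : rel T) a b :
  subrel r r' -> subrel (remove_edge r a b) (remove_edge r' a b).
Proof. by move=> rr' x y /andP[/rr' xy ab]; rewrite /remove_edge xy. Qed.

(* [d i] says that label [i] lies in D. *)
Definition dpdp_colouring (N : nat) (e : rel nat) (d : nat -> bool) : bool :=
  all (fun i => has (fun j => ~~ d j && e i j) (iota 0 N) &&
                (d i || has (fun j => d j && e i j) (iota 0 N))) (iota 0 N).

Definition opposite_neighbours (N : nat) (e : rel nat) (d : nat -> bool) : Prop :=
  forall i, i < N -> exists2 j, j < N & (d j != d i) && e i j.

Definition pairing (N : nat) (e : rel nat) (d : nat -> bool) (p : nat -> nat) : Prop :=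
  forall i, i < N -> ~~ d i -> [/\ p i < N, ~~ d (p i), e i (p i), p (p i) = i & p i != i].

Lemma pairing_subrel N e e' d p : subrel e e' -> pairing N e d p -> pairing N e' d p.
Proof. by move=> ee' pair i iN /(pair i iN)[? ? /ee']. Qed.

Section Quotient.
Variables (T : finType) (lbl : T -> nat) (N : nat).

Definition quotient_of (adj : rel T) (e : rel nat) : Prop :=
  [/\ forall x y, adj x y = e (lbl x) (lbl y), forall x, lbl x < N
    & forall i, i < N -> exists x, lbl x = i].

Definition singleton_fibre (i : nat) : Prop :=
  forall x y, lbl x = i -> lbl y = i -> x = y.

Definition pendant_fibre (e : rel nat) (i : nat) : Prop :=
  exists2 k, singleton_fibre k & forall j, e i j -> j = k.

Lemma singleton_fibre_eq x0 x : singleton_fibre (lbl x0) -> (x == x0) = (lbl x == lbl x0).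
Proof. by move=> s0; apply/eqP/eqP => [->|lx]; last exact: s0 lx erefl. Qed.

Lemma quotient_remove_edge adj e x0 y0 : quotient_of adj e ->
  singleton_fibre (lbl x0) -> singleton_fibre (lbl y0) ->
  quotient_of (remove_edge adj x0 y0) (remove_edge e (lbl x0) (lbl y0)).
Proof.
move=> [adjE lblN lblS] s0 t0; split=> // x y.
by rewrite /remove_edge adjE !(singleton_fibre_eq _ s0) !(singleton_fibre_eq _ t0).
Qed.

Lemma DPDP_of_pairing adj e d p : quotient_of adj e ->
  opposite_neighbours N e d -> pairing N e d p ->
  (forall i, i < N -> ~~ d i -> singleton_fibre i) -> DPDP adj.
Proof.
move=> [adjE lblN lblS] opp pair P_single.
pose f x := odflt x [pick y | lbl y == p (lbl x)].
have lbl_f x : ~~ d (lbl x) -> lbl (f x) = p (lbl x).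
  move=> dx; rewrite /f; case: pickP => [y /eqP //| no_y].
  have [pN _ _ _ _] := pair _ (lblN x) dx.
  by have [y ly] := lblS _ pN; move: (no_y y); rewrite ly eqxx.
apply: (@DPDP_of_partner _ _ [set x | d (lbl x)] f) => x.
  have [j jN /andP[dj ej]] := opp _ (lblN x).
  have [y ly] := lblS j jN; exists y; last by rewrite adjE ly.
  by rewrite !inE ly; move: dj; case: (d j); case: (d (lbl x)).
rewrite inE => dx; have [pN dp ep pp pne] := pair _ (lblN x) dx.
have dfx : ~~ d (lbl (f x)) by rewrite lbl_f.
split; first by rewrite inE lbl_f.
- by rewrite adjE lbl_f.
- by apply: (P_single _ (lblN x) dx) => //; rewrite !lbl_f.
- by apply: contraNneq pne => fx; rewrite -lbl_f // fx.
Qed.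

Lemma colouring_of_DPDP adj e : quotient_of adj e ->
  (forall i, i < N -> singleton_fibre i \/ pendant_fibre e i) ->
  symmetric adj -> DPDP adj -> exists d, dpdp_colouring N e d.
Proof.
move=> [adjE lblN lblS] fibres adjC /(DPDP_neighbours adjC) [D [nbrP nbrD]].
have pendant_in_D x : pendant_fibre e (lbl x) -> x \in D.
  move=> [k sk ek]; apply/contraT => xD.
  have [y yD xy] := nbrP x; have [z zD xz] := nbrD x xD.
  move: xy xz; rewrite !adjE => xy xz.
  by rewrite (sk _ _ (ek _ xy) (ek _ xz)) zD in yD.
pose d i := [forall x, (lbl x == i) ==> (x \in D)].
have dE x : d (lbl x) = (x \in D).
  apply/forallP/idP => [/(_ x)|xD y]; first by rewrite eqxx.
  apply/implyP => /eqP ly; have [sx|px] := fibres _ (lblN x).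
    by rewrite (sx _ _ ly erefl).
  by apply: pendant_in_D; rewrite ly.
exists d; apply/allP => i; rewrite mem_iota => /andP[_ iN].
have [x <-] := lblS i iN; have [y yD xy] := nbrP x.
apply/andP; split.
  by apply/hasP; exists (lbl y); rewrite ?mem_iota ?lblN // dE yD -adjE.
rewrite dE; apply/orP; have [xD|xP] := boolP (x \in D); [by left | right].
have [z zD xz] := nbrD x xP.
by apply/hasP; exists (lbl z); rewrite ?mem_iota ?lblN // dE zD -adjE.
Qed.

Lemma minimal_DPDP_of_quotient adj e : quotient_of adj e ->
  (forall i, i < N -> singleton_fibre i \/ pendant_fibre e i) ->
  symmetric adj -> DPDP adj ->
  (forall a b, a < N -> b < N -> e a b -> forall d, ~~ dpdp_colouring N (remove_edge e a b) d) ->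
  minimal_DPDP adj.
Proof.
move=> q fibres adjC DPDPadj rigid; split=> // adj' adj'C sub.
move=> [x0 [y0 /andP[xy0 nxy0]]] DPDPadj'.
have [adjE lblN _] := q.
have lost_edge_singleton x y : adj x y -> ~~ adj' x y -> singleton_fibre (lbl x).
  move=> xy nxy; case: (fibres _ (lblN x)) => // [[k sk ek]].
  have [D [nbrP _]] := DPDP_neighbours adj'C DPDPadj'.
  have [z _ xz] := nbrP x.
  move: (sub _ _ xz) xy; rewrite !adjE => /ek lz /ek ly.
  by move: xz; rewrite (sk _ _ lz ly) (negbTE nxy).
have s0 := lost_edge_singleton _ _ xy0 nxy0.
have t0 : singleton_fibre (lbl y0).
  by apply: (lost_edge_singleton _ x0); rewrite 1?adjC 1?adj'C.
have sub0 : subrel adj' (remove_edge adj x0 y0).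
  move=> x y xy; rewrite /remove_edge (sub _ _ xy) /=.
  apply/negP => /orP[]/andP[/eqP ex /eqP ey]; subst x y; first by rewrite xy in nxy0.
  by rewrite adj'C xy in nxy0.
have [|d col] := colouring_of_DPDP (quotient_remove_edge q s0 t0) _
  (remove_edge_sym _ _ adjC) (DPDP_subrel sub0 DPDPadj').
  move=> i iN; case: (fibres i iN) => [|[k sk ek]]; [by left | right].
  by exists k => // j /andP[/ek].
by move: col; apply/negP; apply: rigid; rewrite -?adjE.
Qed.

Lemma not_minimal_DPDP_of_quotient adj e a b d p : quotient_of adj e -> symmetric adj ->
  a < N -> b < N -> e a b -> singleton_fibre a -> singleton_fibre b ->
  opposite_neighbours N (remove_edge e a b) d -> pairing N (remove_edge e a b) d p ->
  (forall i, i < N -> ~~ d i -> singleton_fibre i) -> ~ minimal_DPDP adj.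
Proof.
move=> q adjC aN bN eab sa sb opp pair P_single [_ minimal].
have [adjE _ lblS] := q; have [x0 lx0] := lblS a aN; have [y0 ly0] := lblS b bN.
subst a b; apply: (minimal (remove_edge adj x0 y0)).
- exact: remove_edge_sym.
- by move=> x y /andP[].
- by exists x0, y0; rewrite /remove_edge !eqxx adjE eab.
- exact: DPDP_of_pairing (quotient_remove_edge q sa sb) opp pair P_single.
Qed.

End Quotient.

Fixpoint bitseqs (n : nat) : seq bitseq :=
  if n is n'.+1 then [seq b :: s | b <- [:: false; true], s <- bitseqs n'] else [:: [::]].

Lemma mem_bitseqs (s : bitseq) : s \in bitseqs (size s).
Proof. by elim: s => // b s IHs; apply/allpairsP; exists (b, s); case: b. Qed.

Definition adjacency_list (N : nat) (e : rel nat) : seq (nat * seq nat) :=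
  [seq (i, [seq j <- iota 0 N | e i j]) | i <- iota 0 N].

Definition adjacency_list_colouring (l : seq (nat * seq nat)) (d : nat -> bool) : bool :=
  all (fun v => has (predC d) v.2 && (d v.1 || has d v.2)) l.

Lemma dpdp_colouring_adjacency_list N e d :
  dpdp_colouring N e d = adjacency_list_colouring (adjacency_list N e) d.
Proof.
rewrite /adjacency_list_colouring all_map; apply: eq_all => i /=.
by rewrite !has_count !count_filter.
Qed.

Lemma dpdp_colouring_nth N e d :
  dpdp_colouring N e d = dpdp_colouring N e (nth false (mkseq d N)).
Proof.
have dE : {in iota 0 N, d =1 nth false (mkseq d N)}.
  by move=> j; rewrite mem_iota => /andP[_ jN]; rewrite nth_mkseq.
apply: eq_in_all => i iN /=; rewrite -dE //.
by congr (_ && (_ || _)); apply: eq_in_has => j jN /=; rewrite -dE.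
Qed.

(* The adjacency list is computed once per deleted edge, and [if] (unlike [==>]) keeps
   [vm_compute] from running the search for non-edges. *)
Definition colouring_critical (N : nat) (e : rel nat) : bool :=
  all (fun a => all (fun b =>
    if e a b then
      let l := adjacency_list N (remove_edge e a b) in
      all (fun s => ~~ adjacency_list_colouring l (nth false s)) (bitseqs N)
    else true) (iota 0 N)) (iota 0 N).

Lemma colouring_criticalP N e : colouring_critical N e ->
  forall a b, a < N -> b < N -> e a b -> forall d, ~~ dpdp_colouring N (remove_edge e a b) d.
Proof.
move=> /allP crit a b aN bN eab d.
have /crit/allP/(_ b) : a \in iota 0 N by rewrite mem_iota aN.
rewrite mem_iota bN eab => /(_ isT)/allP/(_ (mkseq d N)).
rewrite dpdp_colouring_nth dpdp_colouring_adjacency_list; apply.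
by rewrite -{2}(size_mkseq d N) mem_bitseqs.
Qed.

Section S2Collapse.
Variables (V E : finType) (ends : E -> V * V) (alpha : V -> nat).

Definition S2_collapse (x : S2_vertex ends alpha) : V + E * bool :=
  match x with
  | inl (inl v) => inl (val v)
  | inl (inr c) => inl (tag (val c))
  | inr h => inr h
  end.

Definition S2_core_adj : rel (V + E * bool) := fun u w =>
  match u, w with
  | inr h, inr h' => (h.1 == h'.1) && (h.2 != h'.2)
  | inl v, inr h | inr h, inl v => endpt ends h == v
  | _, _ => false
  end.

Lemma S2_adj_collapse x y :
  S2_adj ends alpha x y = S2_core_adj (S2_collapse x) (S2_collapse y).
Proof. by case: x => [[]|] ?; case: y => [[]|] ?. Qed.

Lemma S2_collapse_inj x y : S2_collapse x = S2_collapse y ->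
  (forall v, S2_collapse x = inl v -> ~~ leaf ends v) -> x = y.
Proof.
case: x => [[[v lv]|[c lc]]|h]; case: y => [[[w lw]|[c' lc']]|h'] //= [] //.
- by move=> vw _; move: lw; rewrite -vw => lw; rewrite (bool_irrelevance lv lw).
- by move=> vc' _; case/negP: (lv); rewrite vc'.
- by move=> _ /(_ _ erefl); rewrite lc.
- by move=> _ /(_ _ erefl); rewrite lc.
- by move=> ->.
Qed.

Lemma S2_collapse_surj u : (forall v, u = inl v -> leaf ends v -> 0 < alpha v) ->
  exists x, S2_collapse x = u.
Proof.
case: u => [v|h] alpha_pos; last by exists (inr h).
have [lv|nlv] := boolP (leaf ends v); last by exists (inl (inl (exist _ v nlv))).
by exists (inl (inr (exist _ (existT _ v (Ordinal (alpha_pos _ erefl lv))) lv))).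
Qed.

Lemma leaf_of_unique_half_edge h v : endpt ends h = v ->
  (forall h', endpt ends h' = v -> h' = h) -> leaf ends v.
Proof.
move=> hv unique; rewrite /leaf /deg.
suff -> : [set h' | endpt ends h' == v] = [set h] by rewrite cards1.
by apply/setP => h'; rewrite !inE; apply/eqP/eqP => [/unique|->].
Qed.

Lemma not_leaf_of_two_half_edges h h' v : endpt ends h = v -> endpt ends h' = v ->
  h != h' -> ~~ leaf ends v.
Proof.
move=> hv h'v hh'; rewrite /leaf /deg; apply/negP => /eqP deg1.
have : [set h; h'] \subset [set h | endpt ends h == v].
  by apply/subsetP => x /set2P[]->; rewrite inE ?hv ?h'v.
by move/subset_leq_card; rewrite deg1 cards2 hh'.
Qed.

End S2Collapse.

Lemma S2_core_adj_sym (V E : finType) (ends : E -> V * V) : symmetric (S2_core_adj ends).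
Proof. by case=> [v|h] [w|h'] //=; rewrite eq_sym [h.2 == _]eq_sym. Qed.

Lemma S2_adj_sym (V E : finType) (ends : E -> V * V) (alpha : V -> nat) :
  symmetric (S2_adj ends alpha).
Proof. by move=> x y; rewrite !S2_adj_collapse S2_core_adj_sym. Qed.

Section S2Label.
Variables (n k : nat) (ends : 'I_k -> 'I_n * 'I_n) (alpha : 'I_n -> nat).

Definition core_label (u : 'I_n + 'I_k * bool) : nat :=
  match u with inl v => 3 * v | inr h => 3 * h.1 + h.2 + 1 end.

Lemma core_label_inj : injective core_label.
Proof.
move=> [v|[j s]] [w|[j' s']] /= eq_label.
- by congr inl; apply: val_inj => /=; lia.
- by exfalso; case: s' eq_label; lia.
- by exfalso; case: s eq_label; lia.
have jj' : j = j' by apply: val_inj => /=; case: s s' eq_label => [] []; lia.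
have ss' : s = s' by case: s s' eq_label => [] []; lia.
by rewrite jj' ss'.
Qed.

Definition S2_label (x : S2_vertex ends alpha) : nat := core_label (S2_collapse x).

Lemma S2_label_lt N x : 3 * n.-1 < N -> 3 * k <= N -> S2_label x < N.
Proof.
rewrite /S2_label; case: (S2_collapse x) => [v|[j s]] /=.
  by have := ltn_ord v; lia.
by have := ltn_ord j; case: s; lia.
Qed.

Lemma S2_label_surj N i : N <= 3 * n -> N <= (3 * k).+1 ->
  (forall v, leaf ends v -> 0 < alpha v) -> i < N -> exists x, S2_label x = i.
Proof.
move=> Nn Nk alpha_pos iN; have [i3|i3] := eqVneq (i %% 3) 0.
  have iv : i %/ 3 < n by lia.
  have [|x xE] := @S2_collapse_surj _ _ ends alpha (inl (Ordinal iv)).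
    by move=> v [<-]; apply: alpha_pos.
  by exists x; rewrite /S2_label xE /=; lia.
have ij : i %/ 3 < k by lia.
have [//|x xE] := @S2_collapse_surj _ _ ends alpha (inr (Ordinal ij, i %% 3 == 2)).
by exists x; rewrite /S2_label xE /=; case: eqP; lia.
Qed.

Lemma S2_label_singleton i : (forall v : 'I_n, leaf ends v -> i != 3 * v) ->
  singleton_fibre S2_label i.
Proof.
move=> not_leaf x y lx ly; apply: S2_collapse_inj => [|v xv].
  by apply: core_label_inj; rewrite -/(S2_label x) -/(S2_label y) lx ly.
by apply/negP => /not_leaf; rewrite -lx /S2_label xv eqxx.
Qed.

End S2Label.
Arguments S2_label {n k} ends alpha x.

Definition path_rel (N : nat) : rel nat := fun i j =>
  (i < N) && (j < N) && ((i.+1 == j) || (j.+1 == i)).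

Definition cycle_rel (N : nat) : rel nat := fun i j =>
  [|| path_rel N i j, (i == N.-1) && (j == 0) | (i == 0) && (j == N.-1)].

Lemma path_rel_sub_cycle_rel N : subrel (path_rel N) (cycle_rel N).
Proof. by move=> i j ij; rewrite /cycle_rel ij. Qed.

Definition pair_partner (first : pred nat) (i : nat) : nat :=
  if first i then i.+1 else i.-1.

Definition standard_colouring (i : nat) : bool := i %% 3 == 0.
Definition standard_first (i : nat) : bool := i %% 3 == 1.

(* On [0, 12) the period-4 pattern D P P D replaces D P P; both put 12 in D, and the D-labels
   3 and 4 keep their P-neighbours 2 and 5. *)
Definition shifted_colouring (i : nat) : bool :=
  (i < 12) && ((i %% 4 == 0) || (i %% 4 == 3)) || (12 <= i) && (i %% 3 == 0).
Definition shifted_first (i : nat) : bool :=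
  (i < 12) && (i %% 4 == 1) || (12 <= i) && (i %% 3 == 1).

Lemma standard_pairing N : N %% 3 != 2 ->
  pairing N (path_rel N) standard_colouring (pair_partner standard_first).
Proof.
rewrite /pairing /standard_colouring /path_rel /pair_partner => N3 i iN di.
case: (boolP (standard_first i)) => /=; case: ifP.
all: by rewrite /standard_first => ? ?; split; lia.
Qed.

Lemma shifted_pairing N : N %% 3 != 2 -> 11 < N ->
  pairing N (remove_edge (path_rel N) 3 4) shifted_colouring (pair_partner shifted_first).
Proof.
rewrite /pairing /shifted_colouring /remove_edge /path_rel /pair_partner => N3 N11 i iN di.
case: (boolP (shifted_first i)) => /=; case: ifP.
all: by rewrite /shifted_first => ? ?; split; lia.
Qed.

Lemma path_standard_opposite N : N %% 3 = 1 -> 1 < N ->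
  opposite_neighbours N (path_rel N) standard_colouring.
Proof.
rewrite /opposite_neighbours /standard_colouring /path_rel => N3 N1 i iN.
by exists (if (i %% 3 == 1) || (i == N.-1) then i.-1 else i.+1); case: ifP => ?; lia.
Qed.

Lemma cycle_standard_opposite N : N %% 3 = 0 ->
  opposite_neighbours N (cycle_rel N) standard_colouring.
Proof.
rewrite /opposite_neighbours /standard_colouring /cycle_rel /path_rel => N3 i iN.
exists (if i %% 3 == 1 then i.-1 else if i == N.-1 then 0 else i.+1).
all: by case: ifP => ?; try case: ifP => ?; lia.
Qed.

Lemma path_shifted_opposite N : N %% 3 = 1 -> 15 < N ->
  opposite_neighbours N (remove_edge (path_rel N) 3 4) shifted_colouring.
Proof.
rewrite /opposite_neighbours /shifted_colouring /remove_edge /path_rel => N3 N15 i iN.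
exists (if (i < 12) && ((i %% 4 == 1) || (i %% 4 == 3)) || (12 <= i) && (i %% 3 == 1)
          || (i == N.-1) then i.-1 else i.+1).
all: by case: ifP => ?; lia.
Qed.

Lemma cycle_shifted_opposite N : N %% 3 = 0 -> 11 < N ->
  opposite_neighbours N (remove_edge (cycle_rel N) 3 4) shifted_colouring.
Proof.
rewrite /opposite_neighbours /shifted_colouring /remove_edge /cycle_rel /path_rel.
move=> N3 N11 i iN.
exists (if (i < 12) && ((i %% 4 == 1) || (i %% 4 == 3)) || (12 <= i) && (i %% 3 == 1)
        then i.-1 else if i == N.-1 then 0 else i.+1).
all: by case: ifP => ?; try case: ifP => ?; lia.
Qed.

Lemma small_path_rel_critical n : 2 <= n <= 5 ->
  colouring_critical (3 * n - 2) (path_rel (3 * n - 2)).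
Proof.
move=> n25; have : n \in [:: 2; 3; 4; 5] by rewrite !inE; lia.
by rewrite !inE => /or4P[]/eqP->; vm_compute.
Qed.

Lemma small_cycle_rel_critical m : 0 < m <= 3 ->
  colouring_critical (3 * m) (cycle_rel (3 * m)).
Proof.
move=> m13; have : m \in [:: 1; 2; 3] by rewrite !inE; lia.
by rewrite !inE => /or3P[]/eqP->; vm_compute.
Qed.

Section PathS2.
Variables (n : nat) (alpha : 'I_n -> nat).
Hypothesis n_gt1 : 1 < n.
Hypothesis alpha_pos : forall v, leaf (@path_ends n) v -> 0 < alpha v.

Local Notation N := (3 * n - 2).
Local Notation lbl := (S2_label (@path_ends n) alpha).

Lemma path_endpt h : endpt (@path_ends n) h = h.1 + h.2 :> nat.
Proof. by case: h => j []; rewrite /endpt /= ?addn1 ?addn0. Qed.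

Lemma path_leaf v : leaf (@path_ends n) v = (v == 0 :> nat) || (v == n.-1 :> nat).
Proof.
have endptP h : endpt (@path_ends n) h = v <-> h.1 + h.2 = v :> nat.
  by split=> [<-|hv]; [rewrite path_endpt | apply: ord_inj; rewrite path_endpt].
have v1_lt : v.-1 < n.-1 by have := ltn_ord v; lia.
have [v_end|v_mid] := boolP (_ || _).
  apply: (@leaf_of_unique_half_edge _ _ _ (Ordinal v1_lt, v != 0 :> nat)).
    by apply/endptP => /=; case: eqP => /= ?; lia.
  move=> [j s] /endptP /= js; have := ltn_ord j.
  by case: s js => /= js j_lt; congr pair; try apply: ord_inj => /=; lia.
have v_lt : v < n.-1 by lia.
apply/negbTE.
apply: (@not_leaf_of_two_half_edges _ _ _ (Ordinal v_lt, false) (Ordinal v1_lt, true)).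
- by apply/endptP => /=; lia.
- by apply/endptP => /=; lia.
- by rewrite xpair_eqE andbF.
Qed.

Lemma path_core_adj u w :
  S2_core_adj (@path_ends n) u w = path_rel N (core_label u) (core_label w).
Proof.
rewrite /path_rel; case: u => [v|[j s]]; case: w => [w|[j' s']] /=.
- by apply/esym/negbTE; have := ltn_ord v; have := ltn_ord w; lia.
- rewrite -val_eqE /= path_endpt; have := ltn_ord v; have := ltn_ord j'.
  by case: s' => /= ? ?; apply/idP/idP; lia.
- rewrite -val_eqE /= path_endpt; have := ltn_ord w; have := ltn_ord j.
  by case: s => /= ? ?; apply/idP/idP; lia.
- rewrite -[j == j']val_eqE /=; have := ltn_ord j; have := ltn_ord j'.
  by case: s; case: s' => /= ? ?; apply/idP/idP; lia.
Qed.

Lemma path_quotient : quotient_of lbl N (S2_adj (@path_ends n) alpha) (path_rel N).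
Proof.
split=> [x y|x|i]; first by rewrite S2_adj_collapse path_core_adj.
  by apply: S2_label_lt; lia.
by apply: S2_label_surj => //; lia.
Qed.

Lemma path_label_singleton i : 0 < i < N.-1 -> singleton_fibre lbl i.
Proof.
by move=> i_mid; apply: S2_label_singleton => v; rewrite path_leaf => /orP[]/eqP->; lia.
Qed.

Lemma path_fibres i : i < N -> singleton_fibre lbl i \/ pendant_fibre lbl (path_rel N) i.
Proof.
move=> iN; have [/path_label_singleton|i_end] := boolP (0 < i < N.-1); first by left.
right; have [->|i0] := eqVneq i 0.
  by exists 1 => [|j]; [apply: path_label_singleton; lia | rewrite /path_rel; lia].
by exists N.-2 => [|j]; [apply: path_label_singleton; lia | rewrite /path_rel; lia].
Qed.

Lemma path_P_singleton (d : nat -> bool) : d 0 -> d N.-1 ->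
  forall i, i < N -> ~~ d i -> singleton_fibre lbl i.
Proof.
move=> d0 dN i iN di; apply: path_label_singleton.
have i0 : i != 0 by apply: contraNneq di => ->.
have iN1 : i != N.-1 by apply: contraNneq di => ->.
lia.
Qed.

Lemma S2_path_DPDP : DPDP (S2_adj (@path_ends n) alpha) /\
  (minimal_DPDP (S2_adj (@path_ends n) alpha) <-> n \in [:: 2; 3; 4; 5]).
Proof.
have q := path_quotient.
have adjC : symmetric (S2_adj (@path_ends n) alpha) by apply: S2_adj_sym.
have DPDP_S2 : DPDP (S2_adj (@path_ends n) alpha).
  apply: (DPDP_of_pairing q (path_standard_opposite _ _) (standard_pairing _)).
  1-3: lia.
  by apply: path_P_singleton; rewrite /standard_colouring //; lia.
split=> //; rewrite !inE; split=> [minimal|small].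
  apply/negPn/negP => large.
  apply: (not_minimal_DPDP_of_quotient (a := 3) (b := 4) q adjC) minimal.
  1-3: by rewrite /path_rel; lia.
  - by apply: path_label_singleton; lia.
  - by apply: path_label_singleton; lia.
  - by apply: path_shifted_opposite; lia.
  - by apply: shifted_pairing; lia.
  - by apply: path_P_singleton; rewrite /shifted_colouring //; lia.
apply: (minimal_DPDP_of_quotient q path_fibres adjC DPDP_S2).
by apply/colouring_criticalP/small_path_rel_critical; lia.
Qed.

End PathS2.

Section CycleS2.
Variables (m : nat) (alpha : 'I_m -> nat).
Hypothesis m_gt0 : 0 < m.

Local Notation N := (3 * m).
Local Notation lbl := (S2_label (@cycle_ends m) alpha).

Lemma cycle_endpt h : endpt (@cycle_ends m) h =
  (if h.2 then (if h.1.+1 == m then 0 else h.1.+1) else h.1) :> nat.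
Proof.
case: h => j [] //=; rewrite /endpt /=; case: eqP => [->|]; first by rewrite modnn.
by move=> jm; rewrite modn_small //; have := ltn_ord j; lia.
Qed.

Lemma cycle_not_leaf v : ~~ leaf (@cycle_ends m) v.
Proof.
apply: (@not_leaf_of_two_half_edges _ _ _ (v, false) (ord_pred v, true)) => //.
  by rewrite /endpt /= ord_predK.
by rewrite xpair_eqE andbF.
Qed.

Lemma cycle_core_adj u w :
  S2_core_adj (@cycle_ends m) u w = cycle_rel N (core_label u) (core_label w).
Proof.
rewrite /cycle_rel /path_rel; case: u => [v|[j s]]; case: w => [w|[j' s']] /=.
- by apply/esym/negbTE; have := ltn_ord v; have := ltn_ord w; lia.
- rewrite -val_eqE /= cycle_endpt; have := ltn_ord v; have := ltn_ord j'.
  by case: s' => /=; [case: ifP => ? |] => ? ?; apply/idP/idP; lia.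
- rewrite -val_eqE /= cycle_endpt; have := ltn_ord w; have := ltn_ord j.
  by case: s => /=; [case: ifP => ? |] => ? ?; apply/idP/idP; lia.
- rewrite -[j == j']val_eqE /=; have := ltn_ord j; have := ltn_ord j'.
  by case: s; case: s' => /= ? ?; apply/idP/idP; lia.
Qed.

Lemma cycle_quotient : quotient_of lbl N (S2_adj (@cycle_ends m) alpha) (cycle_rel N).
Proof.
split=> [x y|x|i]; first by rewrite S2_adj_collapse cycle_core_adj.
  by apply: S2_label_lt; lia.
by apply: S2_label_surj => // v; rewrite (negbTE (cycle_not_leaf v)).
Qed.

Lemma cycle_label_singleton i : singleton_fibre lbl i.
Proof. by apply: S2_label_singleton => v; rewrite (negbTE (cycle_not_leaf v)). Qed.

Lemma S2_cycle_DPDP : DPDP (S2_adj (@cycle_ends m) alpha) /\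
  (minimal_DPDP (S2_adj (@cycle_ends m) alpha) <-> m \in [:: 1; 2; 3]).
Proof.
have q := cycle_quotient.
have adjC : symmetric (S2_adj (@cycle_ends m) alpha) by apply: S2_adj_sym.
have DPDP_S2 : DPDP (S2_adj (@cycle_ends m) alpha).
  apply: (DPDP_of_pairing q (cycle_standard_opposite _)) => [||i _ _].
  - lia.
  - by apply: (pairing_subrel (@path_rel_sub_cycle_rel _)); apply: standard_pairing; lia.
  - exact: cycle_label_singleton.
split=> //; rewrite !inE; split=> [minimal|small].
  apply/negPn/negP => large.
  apply: (not_minimal_DPDP_of_quotient (a := 3) (b := 4) q adjC) minimal.
  1-3: by rewrite /cycle_rel /path_rel; lia.
  - exact: cycle_label_singleton.
  - exact: cycle_label_singleton.
  - by apply: cycle_shifted_opposite; lia.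
  - apply: (pairing_subrel (remove_edge_subrel (@path_rel_sub_cycle_rel _))).
    by apply: shifted_pairing; lia.
  - by move=> i _ _; apply: cycle_label_singleton.
apply: (minimal_DPDP_of_quotient q _ adjC DPDP_S2); first by left; apply: cycle_label_singleton.
by apply/colouring_criticalP/small_cycle_rel_critical; lia.
Qed.

End CycleS2.

Theorem corollary4p7 :
  (forall (n : nat) (alpha : 'I_n -> nat), 2 <= n ->
     (forall v, leaf (@path_ends n) v -> 0 < alpha v) ->
     DPDP (S2_adj (@path_ends n) alpha) /\
     (minimal_DPDP (S2_adj (@path_ends n) alpha) <-> n \in [:: 2; 3; 4; 5]))
  /\
  (forall (m : nat) (alpha : 'I_m -> nat), 0 < m ->
     (forall v, leaf (@cycle_ends m) v -> 0 < alpha v) ->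
     DPDP (S2_adj (@cycle_ends m) alpha) /\
     (minimal_DPDP (S2_adj (@cycle_ends m) alpha) <-> m \in [:: 1; 2; 3])).
Proof.
split=> [n alpha n_gt1 alpha_pos | m alpha m_gt0 _]; first exact: S2_path_DPDP.
exact: S2_cycle_DPDP.
Qed.
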